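(* Let $k,r,h$ be positive integers with $r\mid(k+h)$. Let $m$ be the smallest integer such that $n=k+h+\frac{k+h}{r}\le 2^m-1$. Then there exists a maximally recoverable local $(k,r,h)$-code over the field $\mathbb{F}_{2^{hm}}$.
   Context: For positive integers $k,r,h$ with $r\mid(k+h)$, a local $(k,r,h)$-code over a finite field $\mathbb{F}$ is a linear systematic code of dimension $k$ and length $n=k+h+\frac{k+h}{r}$ consisting of $k$ data symbols, $h$ heavy parity symbols (each a fixed $\mathbb{F}$-linear combination of all data symbols), and, after partitioning the $k+h$ data and heavy parity symbols into $\frac{k+h}{r}$ groups of size $r$, one local parity per group equal to the sum (XOR) of the $r$ symbols of that group. A local group is such a group together with its local parity. The code is maximally recoverable if for every set $E$ of coordinates obtained by picking exactly one coordinate from each local group, puncturing the code in $E$ (deleting those coordinates) yields a maximum distance separable $[k+h,k]$ code (minimum distance $h+1$). *)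

From HB Require Import structures.
From mathcomp Require Import all_boot all_order all_algebra.
Set Implicit Arguments. Unset Strict Implicit. Unset Printing Implicit Defensive.
Import GRing.Theory.
Local Open Scope ring_scope.

(* Coordinates of a local (k,r,h)-code of length k + h + g, g = (k+h)/r:
   positions lshift g i (i : 'I_(k+h)) are the k data symbols (i < k)
   followed by the h heavy parities (k <= i < k+h);
   positions rshift (k+h) j (j : 'I_g) are the g local parities.
   grp : 'I_(k+h) -> 'I_g assigns each data/heavy symbol to its group. *)

Definition local_partition (N g r : nat) (grp : 'I_N -> 'I_g) : Prop :=
  forall j : 'I_g, #|[set i | grp i == j]| = r.

Definition local_incidence (F : fieldType) (N g : nat) (grp : 'I_N -> 'I_g)
  : 'M[F]_(N, g) := \matrix_(i, j) (grp i == j)%:R.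

(* generator matrix of the systematic code: data x ↦
   (x, x *m H, local parities of (x, x *m H)); column j of H gives the
   coefficients of heavy parity j *)
Definition lrc_gen (F : fieldType) (k h g : nat) (grp : 'I_(k + h) -> 'I_g)
  (H : 'M[F]_(k, h)) : 'M[F]_(k, k + h + g) :=
  let A := row_mx (1%:M : 'M[F]_k) H in row_mx A (A *m local_incidence F grp).

Definition local_group (k h g : nat) (grp : 'I_(k + h) -> 'I_g) (j : 'I_g)
  : {set 'I_(k + h + g)} :=
  [set lshift g i | i in [set i | grp i == j]] :|: [set rshift (k + h) j].

(* Maximal recoverability: for every E containing exactly one coordinate of
   each local group, the code punctured in E is an MDS [k+h, k] code, i.e.
   every nonzero data vector yields a punctured codeword of weight >= h+1
   (this gives both dimension k and minimum distance h+1). *)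
Definition maximally_recoverable (F : fieldType) (k h g : nat)
  (grp : 'I_(k + h) -> 'I_g) (H : 'M[F]_(k, h)) : Prop :=
  forall E : {set 'I_(k + h + g)},
    (forall j : 'I_g, #|E :&: local_group grp j| = 1%N) ->
    forall x : 'rV[F]_k, x != 0 ->
      (h + 1 <= #|[set i | (i \notin E) && ((x *m lrc_gen grp H) ord0 i != 0%R)]|)%N.

From HB Require Import structures.
From mathcomp Require Import all_boot all_order all_algebra.
From mathcomp Require Import finfield cyclic zify.
Set Implicit Arguments. Unset Strict Implicit. Unset Printing Implicit Defensive.
Import GRing.Theory.
Local Open Scope ring_scope.

(* Let K = GF(2^m) inside F = GF(2^(hm)). Take distinct nonzero alpha_i in K
   (k + h <= 2^m - 1 of them) and a primitive element z of F, so that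
   1, z, ..., z^(h-1) are K-linearly independent. Then any 2h of the elements
   lam_i = sum_(j<h) z^j alpha_i^(2j+1) are GF(2)-linearly independent: a vanishing
   subset sum kills the odd power sums of the alpha_i below 2h, hence by Frobenius
   all power sums up to 2h, which a Vandermonde determinant forbids.
   The heavy parities are chosen so that every codeword c satisfies the linearised
   checks sum_i c_i lam_i^(2^q) = 0 for q < h; this is possible since the Moore
   matrix of GF(2)-independent elements is invertible. Given an erasure pattern E
   with one coordinate per local group, the local parities turn these checks into
   checks on the unerased coordinates whose weights are sums of at most two lam's
   and vanish on E. Any h unerased weights are GF(2)-independent, so the Moore
   argument again shows that a nonzero punctured codeword has weight > h. *)

Lemma expr_sum_pchar (R : comNzRingType) n (I : Type) (r : seq I) (P : pred I)
    (f : I -> R) :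
  [pchar R].-nat n -> (\sum_(i <- r | P i) f i) ^+ n = \sum_(i <- r | P i) f i ^+ n.
Proof.
move=> charRn; have n_gt0 : (0 < n)%N by case/andP: charRn.
apply: (big_morph (fun x => x ^+ n)); first by move=> x y; exact: exprDn_pchar.
by rewrite expr0n eqn0Ngt n_gt0.
Qed.

Lemma pchar2_nat_pow2 (R : nzSemiRingType) n : 2%N \in [pchar R] -> [pchar R].-nat (2 ^ n)%N.
Proof. by move=> charR2; rewrite pnatX (eq_pnat _ (pcharf_eq charR2)) pnat_id ?orTb. Qed.

Lemma sum_monomials_roots_eq0 (R : idomainType) n (c : 'I_n -> R) (e : 'I_n -> nat)
    (rs : seq R) :
  injective e -> uniq rs -> (forall i, e i < size rs)%N ->
  {in rs, forall x, \sum_i c i * x ^+ e i = 0} -> forall i, c i = 0.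
Proof.
move=> e_inj rs_uniq e_lt c_roots.
pose p : {poly R} := \sum_i c i *: 'X^(e i).
have p_coef i : p`_(e i) = c i.
  rewrite coef_sum (bigD1 i) //= coefZ coefXn eqxx mulr1 big1 ?addr0 // => j ji.
  by rewrite coefZ coefXn (inj_eq e_inj) eq_sym (negbTE ji) mulr0.
suff /eqP p0 : p == 0 by move=> i; rewrite -p_coef p0 coef0.
apply: contraT => p_neq0.
have p_size : (size p <= size rs)%N.
  apply: (leq_trans (size_sum _ _ _)); apply/bigmax_leqP => i _.
  by rewrite (leq_trans (size_scale_leq _ _)) // size_polyXn.
have p_roots : all (root p) rs.
  apply/allP => x /c_roots cx0; rewrite /root /p horner_sum -[X in _ == X]cx0.
  by apply/eqP; apply: eq_bigr => i _; rewrite hornerZ hornerXn.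
by have := max_poly_roots p_neq0 p_roots rs_uniq; rewrite ltnNge p_size.
Qed.

Lemma rowker0_unitmx (F : fieldType) n (M : 'M[F]_n) :
  (forall c : 'rV_n, c *m M = 0 -> c = 0) -> M \in unitmx.
Proof.
move=> kerM; rewrite -row_free_unit -kermx_eq0; apply/eqP/row_matrixP => i.
by rewrite row0; apply: kerM; apply/sub_kermxP; exact: row_sub.
Qed.

Lemma Vandermonde_unit (F : fieldType) n (a : 'rV[F]_n) :
  injective (a 0) -> Vandermonde n a \in unitmx.
Proof.
move=> a_inj; rewrite unitmxE det_Vandermonde unitfE.
apply/prodf_neq0 => i _; apply/prodf_neq0 => j ij.
by rewrite subr_eq0 (inj_eq a_inj); apply: contraTneq ij => ->; rewrite ltnn.
Qed.

Definition binary_indep (R : zmodType) (I : finType) (d : nat) (z : I -> R) :=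
  forall S : {set I}, (0 < #|S| <= d)%N -> \sum_(i in S) z i != 0.

Lemma binary_indep_comp (R : zmodType) (I J : finType) d d' (z : I -> R) (f : J -> I) :
  (d' <= d)%N -> injective f -> binary_indep d z -> binary_indep d' (z \o f).
Proof.
move=> le_d f_inj zP S /andP[S_gt0 S_le]; rewrite -(big_imset _ (in2W f_inj)) /=.
by apply: zP; rewrite card_imset // S_gt0 (leq_trans S_le le_d).
Qed.

Section MooreMatrix.
Variable F : fieldType.
Hypothesis charF2 : 2%N \in [pchar F].

Definition moore_mx s (z : 'I_s -> F) : 'M[F]_s := \matrix_(q, a) z a ^+ (2 ^ q).

Lemma subset_sum_inj (I : finType) (z : I -> F) :
  binary_indep #|I| z -> injective (fun T : {set I} => \sum_(i in T) z i).
Proof.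
move=> zP T T' /= sumTT'.
pose D := [set i | (i \in T) != (i \in T')].
have sumD : \sum_(i in D) z i = \sum_(i in T) z i + \sum_(i in T') z i.
  rewrite [LHS]big_mkcond [X in X + _]big_mkcond [X in _ + X]big_mkcond -big_split.
  apply: eq_bigr => i _; rewrite inE.
  by case: (i \in T); case: (i \in T'); rewrite /= ?addrr_pchar2 ?addr0 ?add0r.
have /eqP D0 : D == set0.
  apply: contraT; rewrite -card_gt0 => D_gt0.
  by have := zP D; rewrite D_gt0 max_card sumD sumTT' addrr_pchar2 // eqxx => /(_ isT).
apply/setP => i; have : i \notin D by rewrite D0 inE.
by rewrite inE negbK => /eqP.
Qed.

Lemma moore_mx_unit s (z : 'I_s -> F) : binary_indep s z -> moore_mx z \in unitmx.
Proof.
move=> zP; apply: rowker0_unitmx => c cM0.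
pose L x := \sum_q c 0 q * x ^+ (2 ^ q).
have L_add : {morph L : x y / x + y}.
  move=> x y; rewrite -big_split; apply: eq_bigr => q _.
  by rewrite exprDn_pchar ?mulrDr ?pchar2_nat_pow2.
have L0 : L 0 = 0 by rewrite /L big1 // => q _; rewrite expr0n expn_eq0 mulr0.
have Lz a : L (z a) = 0.
  have /rowP/(_ a) := cM0; rewrite !mxE => <-.
  by apply: eq_bigr => q _; rewrite mxE.
have L_sums (T : {set 'I_s}) : L (\sum_(a in T) z a) = 0.
  by rewrite (big_morph L L_add L0) big1.
have zP' : binary_indep #|'I_s| z by rewrite card_ord.
apply/rowP => q; rewrite mxE; move: q.
apply: (sum_monomials_roots_eq0 (c := c 0) (e := fun q : 'I_s => (2 ^ q)%N)
  (rs := [seq \sum_(a in T) z a | T : {set 'I_s} <- enum (powerset [set: 'I_s])])).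
- by move=> q q' /eqP; rewrite eqn_exp2l // => /eqP/val_inj.
- by rewrite map_inj_uniq ?enum_uniq //; exact: subset_sum_inj zP'.
- by move=> q; rewrite size_map -cardE card_powerset cardsT card_ord ltn_exp2l.
- by move=> _ /mapP[T _ ->]; exact: L_sums.
Qed.

Lemma moore_support (I : finType) (z w : I -> F) h :
  (forall q, (q < h)%N -> \sum_a w a * z a ^+ (2 ^ q) = 0) ->
  (forall T : {set I}, T \subset [set a | w a != 0] ->
     (0 < #|T| <= h)%N -> \sum_(a in T) z a != 0) ->
  (#|[set a | w a != 0%R]| <= h)%N -> forall a, w a = 0.
Proof.
move=> checks zP W_le a; set W := [set b | w b != 0] in zP W_le.
apply/eqP; apply: contraT => wa.
have aW : a \in W by rewrite inE.
pose z' (t : 'I_#|W|) := z (enum_val t).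
have z'P : binary_indep #|W| z'.
  move=> T /andP[T_gt0 _]; rewrite -(big_imset _ (in2W enum_val_inj)) /=.
  apply: zP; first by apply/subsetP => _ /imsetP[t _ ->]; exact: enum_valP.
  rewrite card_imset ?T_gt0; last exact: enum_val_inj.
  by rewrite (leq_trans (max_card _)) // card_ord.
pose d : 'cV_#|W| := \col_t w (enum_val t).
have Md : moore_mx z' *m d = 0.
  apply/colP => q; rewrite !mxE -[RHS](checks q); last exact: leq_trans (ltn_ord q) W_le.
  rewrite (bigID (mem W)) /= [X in _ = _ + X]big1 ?addr0 => [|b]; last first.
    by rewrite inE negbK => /eqP ->; rewrite mul0r.
  by rewrite (big_enum_val (fun b => w b * z b ^+ (2 ^ q))); apply: eq_bigr => t _;
    rewrite !mxE mulrC.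
have /colP/(_ (enum_rank_in aW a)) := mulKmx (moore_mx_unit z'P) d.
by rewrite Md mulmx0 !mxE enum_rankK_in // => wa0; rewrite -wa0 eqxx in wa.
Qed.

End MooreMatrix.

Lemma power_sums_eq0 (F : fieldType) (I : finType) (a : I -> F) (S : {set I}) :
  injective a -> (forall i, a i != 0) ->
  (forall l, (0 < l <= #|S|)%N -> \sum_(i in S) a i ^+ l = 0) -> S = set0.
Proof.
move=> a_inj a_neq0 sums0; apply/eqP; apply: contraT; rewrite -card_gt0 => S_gt0.
pose v := \row_(t < #|S|) a (enum_val t).
have v_inj : injective (v 0) by move=> t t'; rewrite !mxE => /a_inj/enum_val_inj.
have Vv : Vandermonde #|S| v *m v^T = 0.
  apply/colP => l; rewrite !mxE -[RHS](sums0 l.+1) ?ltn_ord //.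
  rewrite (big_enum_val (fun i => a i ^+ l.+1)).
  by apply: eq_bigr => t _; rewrite !mxE exprSr.
have /colP/(_ (Ordinal S_gt0)) := mulKmx (Vandermonde_unit v_inj) v^T.
by rewrite Vv mulmx0 !mxE => /eqP; rewrite eq_sym (negbTE (a_neq0 _)).
Qed.

Lemma odd_power_sums_eq0 (R : comNzRingType) (I : finType) (a : I -> R) (S : {set I}) d :
  2%N \in [pchar R] ->
  (forall j, (j < d)%N -> \sum_(i in S) a i ^+ (2 * j).+1 = 0) ->
  forall l, (0 < l <= 2 * d)%N -> \sum_(i in S) a i ^+ l = 0.
Proof.
move=> charR2 odd_sums0; elim/ltn_ind => l IH /andP[l_gt0 l_le].
have := odd_double_half l; rewrite -muln2; move: (l./2) => x.
case: (odd l) => /= l_eq; rewrite -l_eq.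
  by rewrite add1n mulnC; apply: odd_sums0; lia.
rewrite add0n (eq_bigr _ (fun i _ => exprM _ _ 2)).
rewrite -(expr_sum_pchar _ _ _ (pchar2_nat_pow2 1 charR2)).
by rewrite IH ?expr0n //; lia.
Qed.

Lemma finField_prim_root (F : finFieldType) : exists z : F, (#|F|.-1).-primitive_root z.
Proof.
have F_gt1 := card_finNzRing_gt1 F.
have n_gt0 : (0 < #|F|.-1)%N by rewrite -subn1 subn_gt0.
have unity : all (#|F|.-1).-unity_root (enum (predC1 (0 : F))).
  apply/allP => x; rewrite mem_enum inE unity_rootE => x_neq0; apply/eqP/(mulfI x_neq0).
  by rewrite mulr1 -exprS prednK ?expf_card // ltnW.
have := has_prim_root n_gt0 unity (enum_uniq _); rewrite -cardE cardC1 leqnn.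
by case/(_ isT)/hasP => z _ z_prim; exists z.
Qed.

Lemma prim_root_fixed_elements (F : fieldType) (Q h N : nat) (z : F) :
  (1 < Q)%N -> (0 < h)%N -> (Q ^ h - 1).-primitive_root z -> (N <= Q - 1)%N ->
  exists a : 'I_N -> F, [/\ injective a, forall i, a i != 0 & forall i, a i ^+ Q = a i].
Proof.
move=> Q_gt1 h_gt0 z_prim N_le.
have Q1_dvd : (Q - 1 %| Q ^ h - 1)%N.
  rewrite -eqn_mod_dvd; last by rewrite expn_gt0 ltnW.
  by rewrite -[Q in (Q ^ h)%N](subnK (ltnW Q_gt1)) -modnXm modnDl modnXm exp1n.
pose c := ((Q ^ h - 1) %/ (Q - 1))%N.
have c_def : (Q ^ h - 1 = c * (Q - 1))%N by rewrite divnK.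
have n_gt0 : (0 < Q ^ h - 1)%N by rewrite subn_gt0 -{1}(expn0 Q) ltn_exp2l.
have c_gt0 : (0 < c)%N by move: n_gt0; rewrite c_def muln_gt0 => /andP[].
have z_neq0 : z != 0.
  apply: contra_eq_neq (prim_expr_order z_prim) => ->.
  by rewrite expr0n eqn0Ngt n_gt0 eq_sym oner_neq0.
exists (fun i => z ^+ (c * i)); split => [i j /eqP | i | i].
- have lt_n (l : 'I_N) : (c * l < Q ^ h - 1)%N.
    by rewrite c_def ltn_pmul2l // (leq_trans (ltn_ord l)).
  by rewrite (eq_prim_root_expr z_prim) !modn_small ?lt_n // eqn_pmul2l // => /eqP/val_inj.
- exact: expf_neq0.
- rewrite -exprM -[Q in (_ * Q)%N](subnK (ltnW Q_gt1)) mulnDr muln1 exprD mulnAC exprM -c_def.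
  by rewrite (prim_expr_order z_prim) expr1n mul1r.
Qed.

Lemma prim_root_powers_indep (F : fieldType) (Q h : nat) (z : F) (c : 'I_h -> F) :
  (1 < Q)%N -> [pchar F].-nat Q -> (Q ^ h - 1).-primitive_root z ->
  (forall j, c j ^+ Q = c j) -> \sum_j c j * z ^+ j = 0 -> forall j, c j = 0.
Proof.
move=> Q_gt1 charQ z_prim cQ sum0.
have charQa a : [pchar F].-nat (Q ^ a)%N by rewrite pnatX charQ.
have c_fix a j : c j ^+ (Q ^ a) = c j.
  by elim: a => [|a IH]; rewrite ?expr1 // expnS mulnC exprM IH.
have z_pow_inj : injective (fun a : 'I_h => z ^+ (Q ^ a)).
  move=> a b /eqP; rewrite (eq_prim_root_expr z_prim).
  have [h_le1 | h_gt1] := leqP h 1.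
    by move=> _; apply: ord_inj; have := ltn_ord a; have := ltn_ord b; lia.
  have Qh : (Q ^ h = Q * Q ^ h.-1)%N by rewrite -expnS prednK // ltnW.
  have Qh1_ge : (Q <= Q ^ h.-1)%N by rewrite -{1}(expn1 Q) leq_exp2l // -ltnS prednK // ltnW.
  have lt_n (l : 'I_h) : (Q ^ l < Q ^ h - 1)%N.
    have : (Q ^ l <= Q ^ h.-1)%N by rewrite leq_exp2l // -ltnS prednK // ltnW.
    rewrite Qh; move: Qh1_ge; set X := (Q ^ h.-1)%N; set Y := (Q ^ l)%N => QX YX.
    have : (2 * X <= Q * X)%N by rewrite leq_mul2r Q_gt1 orbT.
    lia.
  by rewrite !modn_small ?lt_n // eqn_exp2l // => /eqP/val_inj.
apply: (sum_monomials_roots_eq0 (e := val) (rs := [seq z ^+ (Q ^ a) | a : 'I_h])).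
- exact: val_inj.
- by rewrite map_inj_uniq ?enum_uniq.
- by move=> j; rewrite size_map -cardE card_ord; exact: ltn_ord.
move=> _ /mapP[a _ ->].
transitivity ((\sum_j c j * z ^+ j) ^+ (Q ^ a)); last first.
  by rewrite sum0 expr0n expn_eq0 eqn0Ngt (ltnW Q_gt1).
rewrite expr_sum_pchar //; apply: eq_bigr => j _.
by rewrite exprMn c_fix exprAC.
Qed.

Lemma binary_indep_exists (F : finFieldType) h m N :
  (0 < h)%N -> (0 < m)%N -> #|F| = (2 ^ (h * m))%N -> (N <= 2 ^ m - 1)%N ->
  exists lam : 'I_N -> F, binary_indep (2 * h) lam.
Proof.
move=> h_gt0 m_gt0 cardF N_le.
have charF2 : 2%N \in [pchar F] by apply: card_finPcharP cardF _.
have Q_gt1 : (1 < 2 ^ m)%N by rewrite -{1}(expn0 2) ltn_exp2l.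
have [z z_prim] := finField_prim_root F.
rewrite cardF mulnC expnM -subn1 in z_prim.
have [a [a_inj a_neq0 a_fix]] := prim_root_fixed_elements Q_gt1 h_gt0 z_prim N_le.
exists (fun i => \sum_(j < h) z ^+ j * a i ^+ (2 * j).+1) => S /andP[S_gt0 S_le].
apply: contraTneq S_gt0 => sum0; rewrite -leqNgt leqn0 cards_eq0; apply/eqP.
pose p l := \sum_(i in S) a i ^+ l.
have p_fix l : p l ^+ (2 ^ m) = p l.
  rewrite expr_sum_pchar ?pchar2_nat_pow2 //; apply: eq_bigr => i _.
  by rewrite exprAC a_fix.
have p_odd j : (j < h)%N -> p (2 * j).+1 = 0.
  move=> j_lt; pose c (j' : 'I_h) := p (2 * j').+1.
  apply: (prim_root_powers_indep Q_gt1 (pchar2_nat_pow2 m charF2) z_prim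
    (c := c) _ _ (Ordinal j_lt)) => [j'|]; first exact: p_fix.
  rewrite -[RHS]sum0 exchange_big /=; apply: eq_bigr => j' _.
  by rewrite /c /p mulr_suml; apply: eq_bigr => i _; rewrite mulrC.
apply: power_sums_eq0 a_inj a_neq0 _ => l /andP[l_gt0 l_le].
by apply: odd_power_sums_eq0 charF2 p_odd _ _; rewrite l_gt0 (leq_trans l_le).
Qed.

Lemma heavy_parities_exist (F : fieldType) k h (lam : 'I_(k + h) -> F) :
  2%N \in [pchar F] -> binary_indep h (lam \o @rshift k h) ->
  exists H : 'M[F]_(k, h), forall (x : 'rV[F]_k) (q : 'I_h),
    \sum_i row_mx x (x *m H) ord0 i * lam i ^+ (2 ^ q) = 0.
Proof.
move=> charF2 lam_indep.
pose M := \matrix_(i < k + h, q < h) lam i ^+ (2 ^ q).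
have dM_unit : dsubmx M \in unitmx.
  have -> : dsubmx M = (moore_mx (lam \o @rshift k h))^T.
    by apply/matrixP => a q; rewrite !mxE.
  by rewrite unitmx_tr moore_mx_unit.
exists (- (usubmx M *m invmx (dsubmx M))) => x q.
have xM0 : row_mx x (x *m - (usubmx M *m invmx (dsubmx M))) *m M = 0.
  rewrite -[M in _ *m M]vsubmxK mul_row_col mulmxN mulNmx !mulmxA mulmxKV //.
  by rewrite subrr.
have /rowP/(_ q) := xM0; rewrite !mxE => xMq; rewrite -[RHS]xMq.
by apply: eq_bigr => i _; rewrite /M mxE.
Qed.

Lemma sum_bool_card (A : finType) (T : {set A}) (P : pred A) :
  (\sum_(a in T) P a)%N = #|[set a in T | P a]|.
Proof.
rewrite -sum1_card [LHS]big_mkcond [RHS]big_mkcond; apply: eq_bigr => a _.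
by rewrite !inE; case: (a \in T); case: (P a).
Qed.

Lemma sum_cover_pchar2 (R : nzRingType) (A B : finType) (T : {set A}) (D : A -> {set B})
    (f : B -> R) :
  2%N \in [pchar R] ->
  \sum_(a in T) \sum_(u in D a) f u =
  \sum_(u | odd #|[set a in T | u \in D a]|) f u.
Proof.
move=> charR2; rewrite (eq_bigr (fun a => \sum_u (u \in D a)%:R * f u)); last first.
  by move=> a _; rewrite big_mkcond; apply: eq_bigr => u _; case: (u \in D a);
    rewrite ?mul1r ?mul0r.
rewrite exchange_big [RHS]big_mkcond; apply: eq_bigr => u _ /=.
rewrite -mulr_suml -natr_sum (sum_bool_card T (fun a => u \in D a)).
by rewrite -(GRing.natr_mod_pchar charR2) modn2; case: odd; rewrite ?mul1r ?mul0r.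
Qed.

Lemma card_odd_cover (A B : finType) (T : {set A}) (D : A -> {set B}) :
  (#|[set u | odd #|[set a in T | u \in D a]|]| <= \sum_(a in T) #|D a|)%N.
Proof.
rewrite (eq_bigr (fun a => \sum_u (u \in D a))%N) => [|a _]; last first.
  by rewrite -sum1_card big_mkcond.
rewrite exchange_big /= -sum1_card big_mkcond /=; apply: leq_sum => u _.
by rewrite inE sum_bool_card; case: ifP => // /odd_gt0.
Qed.

Lemma lshift_neq_rshift N g (i : 'I_N) (j : 'I_g) : lshift g i != rshift N j.
Proof. by apply/eqP => /(congr1 val) /=; have := ltn_ord i; lia. Qed.

Section LocalGroups.
Variables (k h g : nat) (grp : 'I_(k + h) -> 'I_g).

Lemma mem_local_group_lshift i j : (lshift g i \in local_group grp j) = (grp i == j).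
Proof.
rewrite in_setU in_set1 (negbTE (lshift_neq_rshift _ _)) orbF.
by rewrite mem_imset ?inE //; exact: lshift_inj.
Qed.

Lemma mem_local_group_rshift j' j :
  (rshift (k + h) j' \in local_group grp j) = (j' == j).
Proof.
rewrite in_setU in_set1.
case: imsetP => [[i _ /eqP]|_]; first by rewrite eq_sym (negbTE (lshift_neq_rshift _ _)).
by apply/eqP/eqP => [/rshift_inj|->].
Qed.

Variable E : {set 'I_(k + h + g)}.
Hypothesis E_transversal : forall j : 'I_g, #|E :&: local_group grp j| = 1%N.

Lemma transversal_uniq j a b : a \in E -> b \in E ->
  a \in local_group grp j -> b \in local_group grp j -> a = b.
Proof.
move=> aE bE a_j b_j; have /eqP/cards1P[y Ej] := E_transversal j.
have : a \in E :&: local_group grp j by rewrite inE aE a_j.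
have : b \in E :&: local_group grp j by rewrite inE bE b_j.
by rewrite Ej !inE => /eqP -> /eqP ->.
Qed.

Lemma transversal_exists j : exists2 a, a \in E & a \in local_group grp j.
Proof.
have /eqP/cards1P[y Ej] := E_transversal j.
have /setIP[yE y_j] : y \in E :&: local_group grp j by rewrite Ej set11.
by exists y.
Qed.

End LocalGroups.

Section PuncturedWeights.
Variables (F : fieldType) (k h g : nat) (grp : 'I_(k + h) -> 'I_g) (lam : 'I_(k + h) -> F).
Hypothesis charF2 : 2%N \in [pchar F].
Variable E : {set 'I_(k + h + g)}.
Hypothesis E_transversal : forall j : 'I_g, #|E :&: local_group grp j| = 1%N.

Definition erased_data j := [set u | (grp u == j) && (lshift g u \in E)].

Definition erased_weight j := \sum_(u in erased_data j) lam u.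

(* Modulo the local parities, the checks sum_i c_i lam_i^(2^q) = 0 only see the
   unerased coordinates once every symbol of group j is weighted by lam_i + lam_u
   and the local parity of group j by lam_u, where u is the data or heavy symbol
   of group j erased by E (lam_u := 0 if E erases the local parity). *)
Definition punct_weight (a : 'I_(k + h + g)) : F :=
  match split a with
  | inl i => lam i + erased_weight (grp i)
  | inr j => erased_weight j
  end.

Definition punct_support (a : 'I_(k + h + g)) : {set 'I_(k + h)} :=
  match split a with
  | inl i => i |: erased_data (grp i)
  | inr j => erased_data j
  end.

Lemma punct_weight_lshift i : punct_weight (lshift g i) = lam i + erased_weight (grp i).
Proof. by rewrite /punct_weight (unsplitK (inl _ i)). Qed.

Lemma punct_weight_rshift j : punct_weight (rshift (k + h) j) = erased_weight j.
Proof. by rewrite /punct_weight (unsplitK (inr _ j)). Qed.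

Lemma punct_support_lshift i : punct_support (lshift g i) = i |: erased_data (grp i).
Proof. by rewrite /punct_support (unsplitK (inl _ i)). Qed.

Lemma punct_support_rshift j : punct_support (rshift (k + h) j) = erased_data j.
Proof. by rewrite /punct_support (unsplitK (inr _ j)). Qed.

Lemma card_erased_data j : (#|erased_data j| <= 1)%N.
Proof.
apply/card_le1_eqP => u v; rewrite !inE => /andP[/eqP uj uE] /andP[/eqP vj vE].
apply: lshift_inj; apply: (transversal_uniq E_transversal (j := j) vE uE);
  by rewrite mem_local_group_lshift ?uj ?vj.
Qed.

Lemma erased_weight_lshift u : lshift g u \in E -> erased_weight (grp u) = lam u.
Proof.
move=> uE; rewrite /erased_weight (_ : erased_data _ = [set u]) ?big_set1 //.
by apply/eqP; rewrite eq_sym eqEcard sub1set inE eqxx uE cards1 card_erased_data.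
Qed.

Lemma erased_weight_rshift j : rshift (k + h) j \in E -> erased_weight j = 0.
Proof.
move=> jE; rewrite /erased_weight big1 // => u; rewrite inE => /andP[/eqP uj uE].
have := transversal_uniq E_transversal (j := j) uE jE.
rewrite mem_local_group_lshift mem_local_group_rshift uj !eqxx => /(_ isT isT) /eqP.
by rewrite (negbTE (lshift_neq_rshift _ _)).
Qed.

Lemma punct_weight_erased a : a \in E -> punct_weight a = 0.
Proof.
case: (split_ordP a) => [i -> iE | j -> jE].
  by rewrite punct_weight_lshift erased_weight_lshift // addrr_pchar2.
by rewrite punct_weight_rshift erased_weight_rshift.
Qed.

Lemma punct_weightE a : a \notin E -> punct_weight a = \sum_(u in punct_support a) lam u.
Proof.
case: (split_ordP a) => [i -> iE | j ->]; last by rewrite punct_weight_rshift punct_support_rshift.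
by rewrite punct_weight_lshift punct_support_lshift big_setU1 // inE (negbTE iE) andbF.
Qed.

Lemma card_punct_support a : (#|punct_support a| <= 2)%N.
Proof.
case: (split_ordP a) => [i -> | j ->].
  by rewrite punct_support_lshift cardsU1 (leq_add (leq_b1 _) (card_erased_data _)).
by rewrite punct_support_rshift (leq_trans (card_erased_data _)).
Qed.

Section UnerasedSets.
Variable T : {set 'I_(k + h + g)}.
Hypothesis T_unerased : forall a, a \in T -> a \notin E.

Lemma punct_support_lshift_uniq i : lshift g i \in T ->
  [set a in T | i \in punct_support a] = [set lshift g i].
Proof.
move=> iT; have iE := T_unerased iT; apply/setP => a; rewrite !inE.
case: (split_ordP a) => [i' -> | j ->].
  rewrite punct_support_lshift !inE (negbTE iE) andbF orbF (inj_eq (@lshift_inj _ _)).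
  by rewrite eq_sym; case: eqP => [->|_]; rewrite ?andbT ?andbF.
rewrite punct_support_rshift inE (negbTE iE) !andbF eq_sym.
by rewrite (negbTE (lshift_neq_rshift _ _)).
Qed.

Lemma punct_support_rshift_uniq j : rshift (k + h) j \in T ->
  (forall i, lshift g i \notin T) ->
  exists u, [set a in T | u \in punct_support a] = [set rshift (k + h) j].
Proof.
move=> jT noL; have [b bE b_j] := transversal_exists E_transversal j.
case: (split_ordP b) bE b_j => [u -> uE | j' -> j'E]; last first.
  by rewrite mem_local_group_rshift => /eqP j'j; have := T_unerased jT; rewrite -j'j j'E.
rewrite mem_local_group_lshift => /eqP uj; exists u; apply/setP => a; rewrite !inE.
case: (split_ordP a) => [i -> | j'' ->].
  by rewrite (negbTE (noL i)) (negbTE (lshift_neq_rshift _ _)).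
rewrite punct_support_rshift inE uE andbT uj (inj_eq (@rshift_inj _ _)) eq_sym.
by case: eqP => [->|]; rewrite ?jT ?andbF.
Qed.

Lemma punct_support_uniq : T != set0 ->
  exists u, #|[set a in T | u \in punct_support a]| = 1%N.
Proof.
move=> T_neq0; case: (boolP [exists i, lshift g i \in T]) => [/existsP[i iT] | noL].
  by exists i; rewrite punct_support_lshift_uniq ?cards1.
have [a aT] := set0Pn _ T_neq0.
case: (split_ordP a) aT => [i -> iT | j -> jT].
  by move/existsP: noL; case; exists i.
have noL' i : lshift g i \notin T by apply: contra noL => iT; apply/existsP; exists i.
by have [u uP] := punct_support_rshift_uniq jT noL'; exists u; rewrite uP cards1.
Qed.

Lemma punct_weight_indep : binary_indep (2 * h) lam ->
  (0 < #|T| <= h)%N -> \sum_(a in T) punct_weight a != 0.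
Proof.
move=> lam_indep /andP[T_gt0 T_le].
rewrite (eq_bigr _ (fun a aT => punct_weightE (T_unerased aT))).
rewrite sum_cover_pchar2 // -big_set /=.
apply: lam_indep; apply/andP; split.
  have [u u1] : exists u, #|[set a in T | u \in punct_support a]| = 1%N.
    by apply: punct_support_uniq; rewrite -card_gt0.
  by rewrite card_gt0; apply/set0Pn; exists u; rewrite inE u1.
apply: (leq_trans (card_odd_cover _ _)).
apply: (@leq_trans (\sum_(a in T) 2)%N); first by apply: leq_sum => a _; exact: card_punct_support.
by rewrite sum_nat_const mulnC leq_mul2l.
Qed.

End UnerasedSets.

End PuncturedWeights.

Section LrcCodewords.
Variables (F : fieldType) (k h g : nat) (grp : 'I_(k + h) -> 'I_g) (H : 'M[F]_(k, h)).

Lemma lrc_gen_lshift (x : 'rV[F]_k) i :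
  (x *m lrc_gen grp H) ord0 (lshift g i) = row_mx x (x *m H) ord0 i.
Proof. by rewrite mul_mx_row row_mxEl mul_mx_row mulmx1. Qed.

Lemma lrc_gen_rshift (x : 'rV[F]_k) j :
  (x *m lrc_gen grp H) ord0 (rshift (k + h) j) =
  \sum_(i | grp i == j) row_mx x (x *m H) ord0 i.
Proof.
rewrite mul_mx_row row_mxEr mulmxA mul_mx_row mulmx1 mxE [RHS]big_mkcond.
by apply: eq_bigr => i _; rewrite !mxE; case: (grp i == j); rewrite ?mulr1 ?mulr0.
Qed.

Variable E : {set 'I_(k + h + g)}.
Hypothesis E_transversal : forall j : 'I_g, #|E :&: local_group grp j| = 1%N.

Lemma lrc_unerased_eq0 (x : 'rV[F]_k) :
  (forall a, a \notin E -> (x *m lrc_gen grp H) ord0 a = 0) -> x = 0.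
Proof.
move=> w0; suff c0 u : row_mx x (x *m H) ord0 u = 0.
  by apply/rowP => i; have := c0 (lshift h i); rewrite row_mxEl !mxE.
case: (boolP (lshift g u \in E)) => uE; last by rewrite -lrc_gen_lshift w0.
have jE : rshift (k + h) (grp u) \notin E.
  apply/negP => jE; have := transversal_uniq E_transversal (j := grp u) uE jE.
  rewrite mem_local_group_lshift mem_local_group_rshift !eqxx => /(_ isT isT)/eqP.
  by rewrite (negbTE (lshift_neq_rshift _ _)).
have := w0 _ jE; rewrite lrc_gen_rshift (bigD1 u) //= big1 ?addr0 // => i /andP[/eqP iu iu'].
rewrite -lrc_gen_lshift w0 //; apply: contra iu' => iE.
have := transversal_uniq E_transversal (j := grp u) iE uE.
by rewrite !mem_local_group_lshift iu eqxx => /(_ isT isT)/lshift_inj ->.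
Qed.

Variable lam : 'I_(k + h) -> F.
Hypothesis charF2 : 2%N \in [pchar F].
Hypothesis heavy_checks : forall (x : 'rV[F]_k) (q : 'I_h),
  \sum_i row_mx x (x *m H) ord0 i * lam i ^+ (2 ^ q) = 0.

Lemma lrc_punct_checks (x : 'rV[F]_k) (q : 'I_h) :
  \sum_a (x *m lrc_gen grp H) ord0 a * punct_weight grp lam E a ^+ (2 ^ q) = 0.
Proof.
rewrite big_split_ord /=.
under eq_bigr do rewrite lrc_gen_lshift punct_weight_lshift
  exprDn_pchar ?pchar2_nat_pow2 // mulrDr.
under [X in _ + X]eq_bigr do rewrite lrc_gen_rshift punct_weight_rshift mulr_suml.
rewrite big_split /= heavy_checks add0r (partition_big grp xpredT) //= -big_split /=.
(* each term c_i * erased_weight (grp i) ^+ 2^q arises from symbol i and again from the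
   local parity of its group, so it cancels in characteristic 2 *)
by rewrite big1 // => j _; rewrite -big_split /= big1 // => i /eqP <-; rewrite addrr_pchar2.
Qed.

Hypothesis lam_indep : binary_indep (2 * h) lam.

Lemma lrc_punct_weight (x : 'rV[F]_k) : x != 0 ->
  (h + 1 <= #|[set a | (a \notin E) && ((x *m lrc_gen grp H) ord0 a != 0%R)]|)%N.
Proof.
move=> x_neq0; set w := x *m lrc_gen grp H.
rewrite leqNgt addn1 ltnS; apply: contra x_neq0 => W_le; apply/eqP.
apply: lrc_unerased_eq0 => a aE.
pose w' b := if b \in E then 0 else w ord0 b.
have supp_w' : [set b | w' b != 0] = [set b | (b \notin E) && (w ord0 b != 0)].
  by apply/setP => b; rewrite !inE /w'; case: (b \in E); rewrite ?eqxx.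
have -> : w ord0 a = w' a by rewrite /w' (negbTE aE).
apply: (moore_support charF2 (z := punct_weight grp lam E) (h := h)); last by rewrite supp_w'.
  move=> q q_lt; rewrite -[RHS](lrc_punct_checks x (Ordinal q_lt)); apply: eq_bigr => b _.
  rewrite /w'; case: ifP => // bE.
  by rewrite punct_weight_erased // expr0n expn_eq0 /= !mulr0.
move=> T /subsetP T_sub; apply: punct_weight_indep => // b /T_sub.
by rewrite supp_w' inE => /andP[].
Qed.

End LrcCodewords.

Lemma local_partition_div N r : (0 < r)%N -> (r %| N)%N ->
  exists grp : 'I_N -> 'I_(N %/ r), local_partition r grp.
Proof.
move=> r_gt0 r_dvd.
have grp_lt (i : 'I_N) : (i %/ r < N %/ r)%N by rewrite ltn_divLR // divnK.
exists (fun i => Ordinal (grp_lt i)) => j.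
have member_lt (v : 'I_r) : (j * r + v < N)%N.
  have : (j.+1 <= N %/ r)%N := ltn_ord j.
  by rewrite leq_divRL // mulSn; have := ltn_ord v; lia.
pose member (v : 'I_r) : 'I_N := Ordinal (member_lt v).
have -> : [set i | Ordinal (grp_lt i) == j] = member @: [set: 'I_r].
  apply/setP => i; rewrite inE; apply/eqP/imsetP => [/(congr1 val) /= ij | [v _ ->]].
    exists (Ordinal (ltn_pmod i r_gt0)); rewrite ?inE //.
    by apply: val_inj => /=; rewrite -ij -divn_eq.
  by apply: val_inj => /=; rewrite divnMDl // (divn_small (ltn_ord v)) addn0.
by rewrite card_imset ?cardsT ?card_ord // => v v' /(congr1 val) /= /addnI /val_inj.
Qed.

Theorem theorem12 (k r h m : nat) :
  (0 < k)%N -> (0 < r)%N -> (0 < h)%N -> (r %| k + h)%N ->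
  (k + h + (k + h) %/ r <= 2 ^ m - 1)%N ->
  (forall m' : nat, (k + h + (k + h) %/ r <= 2 ^ m' - 1)%N -> (m <= m')%N) ->
  forall F : finFieldType, #|F| = (2 ^ (h * m))%N ->
  exists (grp : 'I_(k + h) -> 'I_((k + h) %/ r)) (H : 'M[F]_(k, h)),
    local_partition r grp /\ maximally_recoverable grp H.
Proof.
move=> k_gt0 r_gt0 h_gt0 r_dvd n_le _ F cardF.
have kh_le : (k + h <= 2 ^ m - 1)%N by apply: leq_trans n_le; rewrite leq_addr.
have m_gt0 : (0 < m)%N.
  by rewrite lt0n; apply: contraTneq kh_le => ->; rewrite expn0 subnn -ltnNge addn_gt0 k_gt0.
have charF2 : 2%N \in [pchar F] by apply: card_finPcharP cardF _.
have [grp grpP] := local_partition_div r_gt0 r_dvd.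
have [lam lam_indep] := binary_indep_exists h_gt0 m_gt0 cardF kh_le.
have h_le : (h <= 2 * h)%N by rewrite leq_pmull.
have [H H_checks] :=
  heavy_parities_exist charF2 (binary_indep_comp h_le (@rshift_inj k h) lam_indep).
exists grp, H; split=> // E E_transversal.
exact: (lrc_punct_weight E_transversal charF2 H_checks lam_indep).
Qed.
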